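(* Let $k\ge2$ be an even integer. In the maximum-cardinality online matching problem under edge arrivals with a hard budget of $k$ reassignments per arrival (defined in the context), the shortest-augmenting-path algorithm described in the context is $(1-\frac{2}{k+2})$-competitive: on every instance, the matching it outputs has cardinality at least $(1-\frac{2}{k+2})\cdot\mathsf{OPT}$, where $\mathsf{OPT}$ is the maximum cardinality of a matching in the revealed graph.
   Context: Problem: $G=(V,E)$ is a graph, not necessarily bipartite. The algorithm initially knows $V$ and $k$. Over $|E|$ timesteps the edges of $G$ are revealed one at a time. At the end of each timestep the algorithm must output a matching in the graph revealed so far. The new matching $M_2$ must be obtainable from the previous matching $M_1$ (empty before the first timestep) by at most $k$ (re)assignments, the number of (re)assignments being the number of vertices of nonzero degree in $M_1\triangle M_2$; once a vertex is matched it must remain matched at all later timesteps. An augmenting path with respect to a matching $M$ is a path between two distinct vertices not covered by $M$ whose edges alternate between edges not in $M$ and edges in $M$; its length is its number of edges. Algorithm: when an edge $e$ arrives, among all augmenting paths in the current graph with respect to the current matching $M$ that contain $e$, choose a shortest one $P$; if none exists or its length exceeds $k-1$, keep $M$; otherwise output $M\triangle P$. *)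

From mathcomp Require Import all_boot all_order all_algebra.
Set Implicit Arguments. Unset Strict Implicit. Unset Printing Implicit Defensive.

Section Online.
Variable V : finType.

(* Edges are 2-element subsets of V; a graph is given by its edge set. *)
Definition is_matching (G M : {set {set V}}) : bool :=
  (M \subset G) &&
  [forall f in M, forall g in M, (f != g) ==> [disjoint f & g]].

Definition OPT (G : {set {set V}}) : nat :=
  \max_(M : {set {set V}} | is_matching G M) #|M|.

Definition covered (M : {set {set V}}) (v : V) : bool := [exists f in M, v \in f].

Definition pedges (p : seq V) : seq {set V} :=
  [seq [set x.1; x.2] | x <- zip p (behead p)].

Definition plen (p : seq V) : nat := (size p).-1.

Definition is_path (G : {set {set V}}) (p : seq V) : Prop :=
  [/\ 2 <= size p, uniq p & all (fun f => f \in G) (pedges p)].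

(* augmenting path: a path between two distinct uncovered vertices whose
   edges alternate non-matching / matching (starting and ending with a
   non-matching edge, forced by the endpoints being uncovered). *)
Definition augmenting (G M : {set {set V}}) (p : seq V) : Prop :=
  [/\ is_path G p,
      (match p with x :: q => ~~ covered M x && ~~ covered M (last x q)
                  | [::] => false end) &
      forall i, i < size (pedges p) -> (nth set0 (pedges p) i \in M) = odd i].

Definition symdiff (M : {set {set V}}) (p : seq V) : {set {set V}} :=
  let E := [set f in pedges p] in (M :\: E) :|: (E :\: M).

(* One step of the algorithm: G is the revealed graph (including e),
   M the current matching, M' the output. Any shortest augmenting path
   containing e may be chosen. *)
Definition alg_step (k : nat) (G M : {set {set V}}) (e : {set V})
    (M' : {set {set V}}) : Prop :=
  ((exists p, [/\ augmenting G M p, e \in pedges p & plen p <= k - 1]) ->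
     exists p, [/\ augmenting G M p, e \in pedges p,
                (forall q, augmenting G M q -> e \in pedges q -> plen p <= plen q)
              & M' = symdiff M p])
  /\
  (~ (exists p, [/\ augmenting G M p, e \in pedges p & plen p <= k - 1]) ->
     M' = M).

Inductive alg_run (k : nat) : seq {set V} -> {set {set V}} -> Prop :=
| run_nil : alg_run k [::] set0
| run_snoc es e M M' :
    alg_run k es M -> alg_step k [set f in rcons es e] M e M' ->
    alg_run k (rcons es e) M'.

End Online.

(* The algorithm keeps the invariant that every augmenting path of the current
   matching M in the revealed graph has length at least k.  Suppose the path P
   chosen at some step (a shortest augmenting path through the new edge e, of
   length below k) left an augmenting path Q of length below k for the new
   matching M' = M (+) P.  Then M' (+) Q has two more edges than M and differs
   from it only on P and Q, so it yields two edge-disjoint M-augmenting paths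
   with at most |P| + |Q| edges in total; the one avoiding e has length at least k and the other at least
   |P|, a contradiction.
   Finally, if N is any matching larger than M, the symmetric difference of M
   and N contains |N| - |M| edge-disjoint M-augmenting paths, each of length at
   least k and hence using at least k/2 edges of M; so (|N| - |M|) k/2 <= |M|. *)

From mathcomp Require Import all_boot all_order all_algebra.
From mathcomp Require Import zify ring.
From Stdlib Require Import Classical_Prop.
Set Implicit Arguments. Unset Strict Implicit. Unset Printing Implicit Defensive.

Lemma head_rev (T : Type) (x0 : T) (p : seq T) : head x0 (rev p) = last x0 p.
Proof. by case/lastP: p => [|q x] //; rewrite rev_rcons last_rcons. Qed.

Lemma last_rev (T : Type) (x0 : T) (p : seq T) : last x0 (rev p) = head x0 p.
Proof. by case: p => [|x q] //; rewrite rev_cons last_rcons. Qed.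

Lemma count_odd_iota n : count odd (iota 0 n) = n./2.
Proof.
elim: n => // n IH.
by rewrite -addn1 iotaD count_cat IH /= addn0 add0n addn1 -uphalfE uphalf_half addnC.
Qed.

Lemma cardsI_subD (T : finType) (D E X : {set T}) :
  E \subset D -> #|D :&: X| = #|E :&: X| + #|(D :\: E) :&: X|.
Proof.
move=> sED; rewrite -(cardsID E (D :&: X)); congr (_ + _); apply: eq_card => f.
  by rewrite !inE; case fE : (f \in E); rewrite ?andbT ?andbF // (subsetP sED f fE).
by rewrite !inE andbA andbAC.
Qed.

Section Paths.
Variable V : finType.
Implicit Types (p q : seq V) (M : {set {set V}}).

Definition pedge_set p : {set {set V}} := [set f in pedges p].

Definition alternating M p :=
  forall i, i < size (pedges p) -> (nth set0 (pedges p) i \in M) = odd i.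

Lemma pedges_cons2 (x y : V) q : pedges [:: x, y & q] = [set x; y] :: pedges (y :: q).
Proof. by []. Qed.

Lemma size_pedges p : size (pedges p) = plen p.
Proof.
rewrite /pedges size_map size_zip size_behead /plen.
by case: (size p) => // n; rewrite minnE subSnn subn1.
Qed.

Lemma nth_pedges (x0 : V) p i :
  i < plen p -> nth set0 (pedges p) i = [set nth x0 p i; nth x0 p i.+1].
Proof.
elim: p i => [|x [|y q] IH] // [|i] //=.
by rewrite ltnS => lt_i; rewrite -IH.
Qed.

Lemma pedges_rcons p (x y : V) :
  pedges (rcons (rcons p x) y) = rcons (pedges (rcons p x)) [set x; y].
Proof. by elim: p => [|z [|z' q] IH] //; rewrite !rcons_cons pedges_cons2 IH. Qed.

Lemma pedges_rev p : pedges (rev p) = rev (pedges p).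
Proof.
elim: p => [|x [|y q] IH] //.
rewrite pedges_cons2 [rev [:: x, y & q]]rev_cons [rev (y :: q)]rev_cons pedges_rcons.
by rewrite -rev_cons IH rev_cons setUC.
Qed.

Lemma mem_pedges_vertex p (h : {set V}) v : h \in pedges p -> v \in h -> v \in p.
Proof.
elim: p => [|x [|y q] IH] //; rewrite pedges_cons2 inE => /orP [/eqP -> | /IH hq].
  by rewrite !inE => /orP [] /eqP ->; rewrite eqxx ?orbT.
by move/hq => vq; rewrite inE vq orbT.
Qed.

Lemma vertex_mem_pedges p v :
  2 <= size p -> v \in p -> exists2 h, h \in pedges p & v \in h.
Proof.
elim: p => [|x [|y q] IH] // _; rewrite inE => /orP [/eqP -> | vyq].
  by exists [set x; y]; rewrite ?pedges_cons2 !inE ?eqxx.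
case: q IH vyq => [|z q] IH.
  by rewrite inE => /eqP ->; exists [set x; y]; rewrite ?pedges_cons2 !inE eqxx ?orbT.
by case/IH => // h hp vh; exists h; rewrite // pedges_cons2 inE hp orbT.
Qed.

Lemma uniq_pedges p : uniq p -> uniq (pedges p).
Proof.
elim: p => [|x [|y q] IH] //= /andP [xq uq]; rewrite -/(pedges (y :: q)) IH // andbT.
by apply: contra xq => /mem_pedges_vertex; apply; rewrite !inE eqxx.
Qed.

Lemma pedges_meet p i j v : uniq p -> i < j -> j < plen p ->
  v \in nth set0 (pedges p) i -> v \in nth set0 (pedges p) j -> j = i.+1.
Proof.
move=> up lt_ij lt_j; rewrite !(nth_pedges v) ?(ltn_trans lt_ij) // !inE.
have lt_jS : j.+1 < size p by move: lt_j; rewrite /plen; lia.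
have nthK a b : a < size p -> b < size p -> (nth v p a == nth v p b) = (a == b).
  by move=> ha hb; apply: nth_uniq.
have lt_i : i < size p by lia.
have lt_iS : i.+1 < size p by lia.
have lt_j' : j < size p by lia.
by move=> /orP [] /eqP e1 /orP [] /eqP e2; have /eqP := etrans (esym e1) e2;
  rewrite nthK //; lia.
Qed.

Lemma alternating_meet M p (f g : {set V}) v : uniq p -> alternating M p ->
  f \in pedges p -> g \in pedges p -> v \in f -> v \in g -> f != g ->
  (f \in M) != (g \in M).
Proof.
move=> up altp; wlog lt_fg : f g / index f (pedges p) < index g (pedges p).
  move=> gen fp gp vf vg nfg.
  have : index f (pedges p) != index g (pedges p).
    by apply: contra nfg => /eqP /(congr1 (nth set0 (pedges p))); rewrite !nth_index // => ->.
  rewrite neq_ltn => /orP [lt | lt]; first exact: gen.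
  by rewrite eq_sym; apply: gen; rewrite // eq_sym.
move=> fp gp vf vg _; have ltg : index g (pedges p) < plen p by rewrite -size_pedges index_mem.
rewrite -(nth_index set0 fp) -(nth_index set0 gp) in vf vg *.
rewrite !altp ?size_pedges ?(ltn_trans lt_fg) //.
by rewrite (pedges_meet up lt_fg ltg vf vg) /=; case: (odd _).
Qed.

Lemma alternating_inner M p v (x0 : V) : alternating M p -> v \in p ->
  v != head x0 p -> v != last x0 p ->
  exists2 h, h \in pedges p & (h \in M) && (v \in h).
Proof.
move=> altp vp nhead nlast; have vi := nth_index x0 vp.
have lt_i : index v p < size p by rewrite index_mem.
have i0 : index v p != 0 by apply: contra nhead => /eqP i0; rewrite -vi i0 nth0.
have iN : index v p != (size p).-1.
  by apply: contra nlast => /eqP iN; rewrite -vi iN nth_last.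
pose j := if odd (index v p) then index v p else (index v p).-1.
have lt_j : j < plen p by rewrite /j /plen; case: ifP; lia.
have oj : odd j.
  by rewrite /j; case: ifP; case: (index v p) i0 => // i _ /negbT /=; rewrite negbK.
exists (nth set0 (pedges p) j); first by rewrite mem_nth ?size_pedges.
rewrite altp ?size_pedges // oj (nth_pedges x0) // !inE -vi /j.
by case: ifP => _; rewrite ?eqxx // prednK ?lt0n // eqxx orbT.
Qed.

End Paths.

Section Matchings.
Variable V : finType.
Implicit Types (p q : seq V) (A B M N G D : {set {set V}}).

Definition matching A :=
  forall f g (v : V), f \in A -> g \in A -> v \in f -> v \in g -> f = g.

Lemma matchingP G A : is_matching G A <-> A \subset G /\ matching A.
Proof.
rewrite /is_matching; split.
  case/andP => -> /forallP disjA; split => // f g v fA gA vf vg.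
  apply/eqP/negPn/negP => fg.
  have := disjA f; rewrite fA /= => /forallP /(_ g); rewrite gA fg /= -setI_eq0.
  by move/eqP/setP/(_ v); rewrite !inE vf vg.
case=> -> matA; apply/forallP => f; apply/implyP => fA; apply/forallP => g.
apply/implyP => gA; apply/implyP => fg; rewrite -setI_eq0; apply/eqP/setP => v.
rewrite !inE; apply/negP => /andP [vf vg].
by move: fg; rewrite (matA f g v fA gA vf vg) eqxx.
Qed.

Lemma matching_subset A B : A \subset B -> matching B -> matching A.
Proof. by move=> /subsetP sAB matB f g v /sAB fB /sAB gB; apply: matB. Qed.

Lemma card2_mem (f : {set V}) x : #|f| == 2 -> x \in f -> exists2 y, y != x & f = [set x; y].
Proof.
move=> /cards2P [a [b [ab ->]]]; rewrite !inE => /orP [] /eqP ->.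
  by exists b; rewrite // eq_sym.
by exists a; rewrite // setUC.
Qed.

Lemma coveredP M v : reflect (exists2 h, h \in M & v \in h) (covered M v).
Proof.
by apply: (iffP existsP) => [[h /andP [hM vh]] | [h hM vh]]; exists h; rewrite ?hM.
Qed.

Lemma uncovered_edge M v (h : {set V}) : ~~ covered M v -> v \in h -> h \notin M.
Proof. by move=> vM vh; apply: contra vM => hM; apply/coveredP; exists h. Qed.

Lemma covered_cover M v : covered M v = (v \in cover M).
Proof. by apply/coveredP/bigcupP => [[h hM vh] | [h hM vh]]; exists h. Qed.

Lemma matching_trivIset M : matching M -> trivIset M.
Proof.
move=> matM; apply/trivIsetP => f g fM gM; apply: contraR => /pred0Pn [v /andP [vf vg]].
by rewrite (matM f g v).
Qed.

Definition symd A B := (A :\: B) :|: (B :\: A).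

Lemma in_symd A B f : (f \in symd A B) = (f \in A) (+) (f \in B).
Proof. by rewrite !inE; case: (f \in A); case: (f \in B). Qed.

Lemma card_symd A B : #|symd A B| + (#|A :&: B|).*2 = #|A| + #|B|.
Proof.
have disjD : (A :\: B) :&: (B :\: A) = set0.
  by apply/setP => f; rewrite !inE; case: (f \in A); case: (f \in B).
have := cardsUI (A :\: B) (B :\: A); rewrite disjD cards0 addn0.
by have := cardsID B A; have := cardsID A B; rewrite setIC /symd; lia.
Qed.

Lemma symd_subset A B D : A \subset D -> B \subset D -> symd A B \subset D.
Proof. by move=> sAD sBD; rewrite subUset !(subset_trans (subsetDl _ _)). Qed.

Lemma symd_setD1 M N (f g : {set V}) : f \notin M -> g \notin N ->
  symd (M :\ g) (N :\ f) = symd M N :\: [set f; g].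
Proof.
move=> fM gN; apply/setP => h; rewrite in_setD !in_symd !inE.
by case: eqVneq => [->|_]; case: eqVneq => [->|_]; rewrite /= ?(negbTE fM) ?(negbTE gN) ?addbF.
Qed.

Lemma augmentingE G M p (x0 : V) : augmenting G M p <->
  [/\ is_path G p, ~~ covered M (head x0 p), ~~ covered M (last x0 p) & alternating M p].
Proof.
case: p => [|x q]; first by split => [[[]]|[[]]].
by split => [[pp /andP [hx hl] altp] | [pp hx hl altp]]; split; rewrite ?hx.
Qed.

Lemma augmenting_path G M p :
  augmenting G M p -> [/\ 2 <= size p, uniq p & {subset pedges p <= G}].
Proof. by case=> [[p2 up /allP]]. Qed.

Lemma augmenting_restrict G G' M p :
  augmenting G M p -> {subset pedges p <= G'} -> augmenting G' M p.
Proof. by case=> [[p2 up _] ends altp] sub; split => //; split => //; apply/allP. Qed.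

Lemma augmenting_subset G G' M p :
  augmenting G M p -> G \subset G' -> augmenting G' M p.
Proof.
move=> augp /subsetP sGG'; have [_ _ sub] := augmenting_path augp.
by apply: (augmenting_restrict augp) => h /sub /sGG'.
Qed.

Lemma pedge_set_sub G M p : augmenting G M p -> pedge_set p \subset G.
Proof. by case/augmenting_path => _ _ sub; apply/subsetP => f; rewrite inE => /sub. Qed.

Lemma augmenting_odd G M p : augmenting G M p -> odd (plen p).
Proof.
case: p => [|x q]; first by case=> [[]].
move/(augmentingE _ _ _ x) => [[p2 _ _] _ hl altp].
have n0 : 0 < plen (x :: q) by rewrite /plen; lia.
have lastE : nth x (x :: q) (plen (x :: q)) = last x (x :: q) := nth_last x (x :: q).
have := altp (plen (x :: q)).-1; rewrite size_pedges ltn_predL => /(_ n0).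
rewrite (nth_pedges x) ?ltn_predL // prednK // lastE.
rewrite (negbTE (uncovered_edge hl _)) ?inE ?eqxx ?orbT //.
by case: (plen _) n0 => //= n _ <-.
Qed.

Lemma augmenting_rev G M p : augmenting G M p -> augmenting G M (rev p).
Proof.
move=> augp; have oddp := augmenting_odd augp.
case: p augp oddp => [|x q]; first by case=> [[]].
move/(augmentingE _ _ _ x) => [[p2 up sub] hh hl altp] oddp.
apply/(augmentingE _ _ _ x); split; rewrite ?head_rev ?last_rev //.
  by split; rewrite ?size_rev ?rev_uniq ?pedges_rev ?all_rev.
move=> i; rewrite pedges_rev size_rev => lt_i.
rewrite nth_rev // altp; rewrite size_pedges in lt_i *; last lia.
by rewrite oddB // oddp /= negbK.
Qed.

Lemma pedge_set_rev p : pedge_set (rev p) = pedge_set p.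
Proof. by apply/setP => f; rewrite !inE pedges_rev mem_rev. Qed.

Lemma card_pedge_set p : uniq p -> #|pedge_set p| = plen p.
Proof. by move/uniq_pedges/card_uniqP; rewrite cardsE size_pedges. Qed.

Lemma card_pedge_setI p M : uniq p -> alternating M p ->
  #|pedge_set p :&: M| = (plen p)./2.
Proof.
move=> /uniq_pedges up altp.
have -> : pedge_set p :&: M = [set f in filter (mem M) (pedges p)].
  by apply/setP => f; rewrite !inE mem_filter andbC.
rewrite cardsE (card_uniqP _) ?filter_uniq // size_filter.
rewrite -(mkseq_nth set0 (pedges p)) /mkseq count_map -count_odd_iota size_pedges.
apply: eq_in_count => i; rewrite mem_iota /= => lt_i.
by apply: altp; rewrite size_pedges.
Qed.

Lemma card_symd_augmenting G M p :
  augmenting G M p -> #|symd M (pedge_set p)| = #|M|.+1.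
Proof.
move=> augp; have [_ up _] := augmenting_path augp.
have := card_symd M (pedge_set p); rewrite setIC card_pedge_set //.
rewrite card_pedge_setI //; last by case: augp.
have := odd_double_half (plen p); rewrite (augmenting_odd augp); lia.
Qed.

Lemma matching_symd_augmenting G M p :
  matching M -> augmenting G M p -> matching (symd M (pedge_set p)).
Proof.
move=> matM augp f g v; have [_ up _] := augmenting_path augp.
move/(augmentingE _ _ _ v): augp => [_ hh hl altp].
have onp h : h \in M -> v \in h -> v \in p -> h \in pedges p.
  move=> hM vh vp; have vM : covered M v by apply/coveredP; exists h.
  have vne w : ~~ covered M w -> v != w by apply: contraNneq => <-.
  have [h' h'p /andP [h'M vh']] :=
    alternating_inner altp vp (vne _ hh) (vne _ hl).
  by rewrite (matM h h' v).
rewrite !in_symd !inE.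
case fp : (f \in pedges p); case gp : (g \in pedges p); rewrite /= ?addbT ?addbF.
- move=> fM gM vf vg; apply/eqP/negPn/negP => nfg.
  by have := alternating_meet up altp fp gp vf vg nfg; rewrite (negbTE fM) (negbTE gM).
- by move=> _ gM vf vg; rewrite onp ?(mem_pedges_vertex fp) in gp.
- by move=> fM _ vf vg; rewrite onp ?(mem_pedges_vertex gp) in fp.
- exact: matM.
Qed.

Lemma covered_setD1 M (g : {set V}) v : v \notin g -> covered (M :\ g) v = covered M v.
Proof.
move=> vg; apply/coveredP/coveredP => [[h] | [h hM vh]].
  by rewrite inE => /andP [_ hM]; exists h.
by exists h; rewrite // !inE hM andbT; apply: contraNneq vg => <-.
Qed.

Lemma augmenting_setD1 G M (g : {set V}) p :
  augmenting G (M :\ g) p -> (forall v, v \in g -> v \notin p) -> augmenting G M p.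
Proof.
case: p => [|x q]; first by case=> [[]].
move/(augmentingE _ _ _ x) => [pp hh hl altp] gp.
have pg v : v \in x :: q -> v \notin g by apply: contraL; apply: gp.
apply/(augmentingE _ _ _ x); split => //.
- by rewrite /= -(covered_setD1 M (pg x (mem_head x q))).
- by rewrite /= -(covered_setD1 M (pg (last x q) (mem_last x q))).
move=> i lt_i; rewrite size_pedges in lt_i; rewrite -altp ?size_pedges // !inE andbC.
case: (_ \in M) => //=; apply/esym.
have pi : nth x (x :: q) i \in x :: q by rewrite mem_nth //; move: lt_i; rewrite /plen /=; lia.
by apply: contraNneq (pg _ pi) => <-; rewrite (nth_pedges x) // set21.
Qed.

Lemma augmenting_pair G M (x y : V) : x != y -> [set x; y] \in G ->
  ~~ covered M x -> ~~ covered M y -> augmenting G M [:: x; y].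
Proof.
move=> xy fG xM yM; apply/(augmentingE _ _ _ x); split => //.
  by split; rewrite //= ?inE ?xy ?fG.
by case=> [|i] //= _; rewrite (negbTE (uncovered_edge xM (set21 x y))).
Qed.

Lemma augmenting_prepend G M (x y w : V) q :
  augmenting G (M :\ [set y; w]) (w :: q) -> [set y; w] \in M ->
  [set x; y] \in G -> [set y; w] \in G -> ~~ covered M x -> x != y ->
  x \notin w :: q -> y \notin w :: q -> augmenting G M [:: x, y, w & q].
Proof.
move/(augmentingE _ _ _ w) => [[p2 up sub] _ hl altp] gM fG gG xM xy xp yp.
have ng h : h \in pedges (w :: q) -> h != [set y; w].
  by move=> hp; apply: contraNneq yp => hg; apply: (mem_pedges_vertex hp); rewrite hg set21.
apply/(augmentingE _ _ _ x); split => //.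
- split => //; first by rewrite /= in_cons negb_or xy xp yp.
  by rewrite !pedges_cons2 /= fG gG.
- move: hl; rewrite /= covered_setD1 // !inE negb_or; apply/andP; split.
    by apply: contraNneq yp => <-; rewrite /= mem_last.
  move: p2 up => /=; case: q {xp yp sub altp ng} => [|z q] //= _ /andP [wq _].
  by apply: contraNneq wq => <-; rewrite mem_last.
case=> [|[|i]] //=; first by rewrite (negbTE (uncovered_edge xM (set21 x y))).
rewrite -/(pedges (w :: q)) !ltnS => lt_i.
by rewrite -altp // !inE ng ?mem_nth //= negbK.
Qed.

Lemma augmenting_orient G M p w : augmenting G M p -> w \in p -> ~~ covered M w ->
  exists q, augmenting G M (w :: q) /\ pedge_set (w :: q) = pedge_set p.
Proof.
move=> augp wp wM.
have oriented p' : augmenting G M p' -> head w p' = w ->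
    exists q, augmenting G M (w :: q) /\ pedge_set (w :: q) = pedge_set p'.
  case: p' => [|z q] augp' /= zw; first by case: augp' => [[]].
  by exists q; rewrite -zw.
have [_ _ _ altp] := (augmentingE _ _ _ w).1 augp.
have : (w == head w p) || (w == last w p).
  apply: contraR wM; rewrite negb_or => /andP [nh nl].
  by have [h _ /andP [hM wh]] := alternating_inner altp wp nh nl; apply/coveredP; exists h.
case/orP => /eqP wE; first exact: oriented.
have [|q [augq eq_q]] := oriented _ (augmenting_rev augp); first by rewrite head_rev.
by exists q; rewrite eq_q pedge_set_rev.
Qed.

Lemma augmenting_avoid G M p v :
  augmenting G M p -> (forall h, h \in G -> v \notin h) -> v \notin p.
Proof.
move=> augp vG; have [p2 _ sub] := augmenting_path augp.
by apply/negP => /(vertex_mem_pedges p2) [h /sub hG]; apply/negP; apply: vG.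
Qed.

Lemma exists_covered_uncovered M N :
  {in M, forall f : {set V}, #|f| == 2} -> {in N, forall f : {set V}, #|f| == 2} ->
  matching N ->
  #|M| < #|N| -> exists x, covered N x && ~~ covered M x.
Proof.
move=> twoM twoN matN ltMN.
have sum2 (A : {set {set V}}) :
    {in A, forall f : {set V}, #|f| == 2} -> \sum_(f in A) #|f| = #|A| * 2.
  by move=> twoA; rewrite -sum_nat_const; apply: eq_bigr => f /twoA /eqP.
have cM : #|cover M| <= #|M| * 2 by rewrite -sum2 //; apply: (leq_card_cover M).1.
have cN : #|cover N| = #|N| * 2 by rewrite -sum2 //; apply/esym/eqP/matching_trivIset.
have /subsetPn [x xN xM] : ~~ (cover N \subset cover M).
  by apply/negP => /subset_leq_card; rewrite cN; lia.
by exists x; rewrite !covered_cover xN xM.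
Qed.

Lemma symd_setD1_degrees M N (x y w : V) :
  matching M -> matching N -> [set x; y] \in N -> [set y; w] \in M -> ~~ covered M x ->
  let D := symd (M :\ [set y; w]) (N :\ [set x; y]) in
  [/\ forall h, h \in D -> x \notin h, forall h, h \in D -> y \notin h &
      forall h h', h \in D -> h' \in D -> w \in h -> w \in h' -> h = h'].
Proof.
set f := [set x; y]; set g := [set y; w] => matM matN fN gM xM D.
have inD h : h \in D -> (h \in M) && (h != g) || (h \in N) && (h != f).
  by rewrite /D in_symd !inE; case: (h \in M); case: (h \in N); case: (h != g); case: (h != f).
split=> [h | h | h h' hD h'D wh wh'].
- case/inD/orP => /andP [hA hB]; apply/negP => xh.
    by rewrite (negbTE (uncovered_edge xM xh)) in hA.
  by rewrite (matN h f x) ?set21 ?eqxx in hB.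
- case/inD/orP => /andP [hA hB]; apply/negP => yh.
    by rewrite (matM h g y) ?set21 ?eqxx in hB.
  by rewrite (matN h f y) ?set22 ?eqxx in hB.
have inN h1 : h1 \in D -> w \in h1 -> h1 \in N.
  case/inD/orP => /andP [h1M h1g] // wh1.
  by rewrite (matM h1 g w) ?set22 ?eqxx in h1g.
exact: (matN h h' w (inN h hD wh) (inN h' h'D wh')).
Qed.

End Matchings.

Section Packings.
Variable V : finType.
Implicit Types (p q : seq V) (ps : seq (seq V)) (M N D X : {set {set V}}).

(* Taking X = [set f] shows that no edge f is used twice. *)
Definition augmenting_packing D M ps :=
  {in ps, forall p, augmenting D M p} /\
  forall X, \sum_(p <- ps) #|pedge_set p :&: X| <= #|D :&: X|.

Lemma augmenting_packing_sub D D' M ps :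
  D \subset D' -> augmenting_packing D M ps -> augmenting_packing D' M ps.
Proof.
move=> sDD' [augps disj]; split=> [p /augps augp | X].
  exact: augmenting_subset augp sDD'.
by apply: leq_trans (disj X) _; apply/subset_leq_card/setSI.
Qed.

Lemma augmenting_packing_cons D M p ps : augmenting D M p ->
  augmenting_packing (D :\: pedge_set p) M ps -> augmenting_packing D M (p :: ps).
Proof.
move=> augp pk; have [augps _] := augmenting_packing_sub (subsetDl D _) pk.
split=> [q | X]; first by rewrite inE => /predU1P [-> | /augps].
have [_ disj] := pk.
by rewrite big_cons (cardsI_subD _ (pedge_set_sub augp)) leq_add2l.
Qed.

Lemma augmenting_packing_rem D M p ps : p \in ps ->
  augmenting_packing D M ps -> augmenting_packing (D :\: pedge_set p) M (rem p ps).
Proof.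
move=> pps [augps disj]; have augp := augps p pps.
have sumE X : \sum_(q <- ps) #|pedge_set q :&: X| =
    #|pedge_set p :&: X| + \sum_(q <- rem p ps) #|pedge_set q :&: X|.
  by rewrite (big_rem p pps).
split=> [q qrem | X]; last first.
  by have := disj X; rewrite sumE (cardsI_subD _ (pedge_set_sub augp)) leq_add2l.
have augq := augps q (mem_rem qrem).
apply: (augmenting_restrict augq) => h hq.
rewrite inE (subsetP (pedge_set_sub augq)) ?inE // andbT; apply/negP => hp.
have := disj [set h]; rewrite sumE (big_rem q qrem) /=.
rewrite !(setIidPr _) ?sub1set ?inE ?(subsetP (pedge_set_sub augp)) ?inE // cards1.
lia.
Qed.

Lemma augmenting_packing_setD1 D M (g : {set V}) ps :
  augmenting_packing D (M :\ g) ps -> (forall q v, q \in ps -> v \in g -> v \notin q) ->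
  augmenting_packing D M ps.
Proof.
move=> [augps disj] gps; split=> // q qps.
by apply: (augmenting_setD1 (augps q qps)) => v; apply: gps.
Qed.

Lemma augmenting_packing_pair M N ps (x y : V) :
  [set x; y] \in N -> x != y -> ~~ covered M x -> ~~ covered M y ->
  augmenting_packing (symd M (N :\ [set x; y])) M ps ->
  augmenting_packing (symd M N) M ([:: x; y] :: ps).
Proof.
move=> fN xy xM yM pk; have fM := uncovered_edge xM (set21 x y).
apply: augmenting_packing_cons.
  by apply: augmenting_pair; rewrite // in_symd fN (negbTE fM).
have -> // : symd M N :\: pedge_set [:: x; y] = symd M (N :\ [set x; y]).
apply/setP => h; rewrite !inE.
by case: eqVneq => [->|] /=; rewrite ?(negbTE fM) ?andbF //; case: (h \in M); case: (h \in N).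
Qed.

Lemma augmenting_packing_extend M N ps (x y w : V) :
  matching M -> matching N -> [set x; y] \in N -> [set y; w] \in M ->
  x != y -> ~~ covered M x ->
  augmenting_packing (symd (M :\ [set y; w]) (N :\ [set x; y])) (M :\ [set y; w]) ps ->
  exists2 ps', size ps' = size ps & augmenting_packing (symd M N) M ps'.
Proof.
set f := [set x; y]; set g := [set y; w]; set D := symd _ _.
move=> matM matN fN gM xy xM pk; have [augps _] := pk.
have [xD yD wD] := symd_setD1_degrees matM matN fN gM xM.
have fM : f \notin M := uncovered_edge xM (set21 x y).
have gN : g \notin N.
  apply: contra xM => gN; apply/coveredP; exists g => //.
  by rewrite -(matN f g y) ?set21 ?set22.
have sD : D \subset symd M N by rewrite /D symd_setD1 // subsetDl.
case: (boolP (has (fun q => w \in q) ps)) => [/hasP [p0 p0ps wp0] | /hasPn wps]; last first.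
  exists ps => //; apply: (augmenting_packing_sub sD); apply: (augmenting_packing_setD1 pk).
  move=> q v qps; rewrite !inE => /orP [] /eqP -> //; last exact: wps.
  exact: augmenting_avoid (augps q qps) yD.
have wM' : ~~ covered (M :\ g) w.
  apply/coveredP => [[h]]; rewrite !inE => /andP [hg hM] wh.
  by rewrite (matM h g w) ?set22 ?eqxx in hg.
have [q [augq Eq]] := augmenting_orient (augps _ p0ps) wp0 wM'.
have augp : augmenting (symd M N) M [:: x, y, w & q].
  apply: augmenting_prepend; rewrite ?in_symd ?fN ?gM ?(negbTE fM) ?(negbTE gN) //.
  - exact: augmenting_subset augq sD.
  - exact: augmenting_avoid augq xD.
  - exact: augmenting_avoid augq yD.
exists ([:: x, y, w & q] :: rem p0 ps).
  by rewrite /= size_rem // prednK //; case: (ps) p0ps.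
apply: augmenting_packing_cons augp _.
have -> : symd M N :\: pedge_set [:: x, y, w & q] = D :\: pedge_set p0.
  rewrite -Eq /D symd_setD1 // /pedge_set !pedges_cons2.
  move: (pedges (w :: q)) => s; apply/setP => h; rewrite !inE.
  by case: (h == f); case: (h == g); case: (h \in s).
have pk' := augmenting_packing_rem p0ps pk; have [augps' _] := pk'.
apply: (augmenting_packing_setD1 pk') => q' v q'ps; rewrite !inE => /orP [] /eqP ->.
  by apply: augmenting_avoid (augps' q' q'ps) _ => h; rewrite inE => /andP [_ /yD].
have [p02 _ _] := augmenting_path (augps _ p0ps).
have [h0 h0p wh0] := vertex_mem_pedges p02 wp0.
have h0D : h0 \in D by rewrite (subsetP (pedge_set_sub (augps _ p0ps))) ?inE.
apply: augmenting_avoid (augps' q' q'ps) _ => h; rewrite inE => /andP [hp0 hD].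
by apply: contra hp0 => wh; rewrite inE (wD h h0).
Qed.

(* Induction on |N|: pick x covered by N but not by M, with N-edge xy.  If y is
   not covered by M, xy is an augmenting path; otherwise delete xy from N and the
   M-edge yw from M, and put x y in front of the path through w, if any. *)
Lemma augmenting_packing_exists M N k :
  matching M -> matching N ->
  {in M, forall f : {set V}, #|f| == 2} -> {in N, forall f : {set V}, #|f| == 2} ->
  #|M| + k <= #|N| -> exists2 ps, size ps = k & augmenting_packing (symd M N) M ps.
Proof.
have [n] := ubnP #|N|; elim: n => // n IH in M N k *; rewrite ltnS => leNn.
move=> matM matN twoM twoN.
case: k => [_ | k leMN]; first by exists [::]; split => // X; rewrite big_nil.
have [|x /andP [/coveredP [f fN xf] xM]] := exists_covered_uncovered twoM twoN matN.
  by lia.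
have [y yx fE] := card2_mem (twoN f fN) xf; rewrite {xf}fE in fN.
have xy : x != y by rewrite eq_sym.
have subN := subsetDl N [set [set x; y]].
have matN' := matching_subset subN matN.
have twoN' : {in N :\ [set x; y], forall f : {set V}, #|f| == 2}.
  by move=> h /setD1P [_ /twoN].
have cardN : #|N| = #|N :\ [set x; y]|.+1 by rewrite (cardsD1 [set x; y] N) fN.
have ltN' : #|N :\ [set x; y]| < n by lia.
case: (boolP (covered M y)) => [/coveredP [g gM yg] | yM].
  have [w wy gE] := card2_mem (twoM g gM) yg; rewrite {yg}gE in gM.
  have cardM : #|M| = #|M :\ [set y; w]|.+1 by rewrite (cardsD1 [set y; w] M) gM.
  have twoM' : {in M :\ [set y; w], forall f : {set V}, #|f| == 2}.
    by move=> h /setD1P [_ /twoM].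
  have [|ps sz pk] :=
    IH (M :\ [set y; w]) _ k.+1 ltN' (matching_subset (subsetDl _ _) matM) matN' twoM' twoN'.
    by lia.
  have [ps' sz' pk'] := augmenting_packing_extend matM matN fN gM xy xM pk.
  by exists ps'; rewrite ?sz' ?sz.
have [|ps sz pk] := IH M _ k ltN' matM matN' twoM twoN'; first by lia.
exists ([:: x; y] :: ps); first by rewrite /= sz.
exact: augmenting_packing_pair fN xy xM yM pk.
Qed.

Lemma augmenting_packing_disjoint D M p q ps : augmenting_packing D M (p :: ps) ->
  q \in ps -> [disjoint pedge_set q & pedge_set p].
Proof.
move=> pk qps; have [augps _] := augmenting_packing_rem (mem_head p ps) pk.
rewrite /= eqxx in augps.
by have := pedge_set_sub (augps q qps); rewrite subsetD => /andP [].
Qed.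

Lemma augmenting_packing_plen D M ps :
  augmenting_packing D M ps -> \sum_(p <- ps) plen p <= #|D|.
Proof.
move=> [augps disj]; have := disj setT; rewrite setIT; apply: leq_trans.
apply/eq_leq/eq_big_seq => p /augps augp.
by have [_ up _] := augmenting_path augp; rewrite setIT card_pedge_set.
Qed.

Lemma augmenting_packing_half D M ps :
  augmenting_packing D M ps -> \sum_(p <- ps) (plen p)./2 <= #|D :&: M|.
Proof.
move=> [augps disj]; apply: leq_trans (disj M).
apply/eq_leq/eq_big_seq => p /augps augp.
by have [_ up _] := augmenting_path augp; rewrite card_pedge_setI //; case: augp.
Qed.

End Packings.

Section Algorithm.
Variable V : finType.
Implicit Types (p q : seq V) (es : seq {set V}) (M N G : {set {set V}}).

Definition no_short_augmenting k G M := forall q, augmenting G M q -> k <= plen q.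

Definition alg_invariant k G M :=
  [/\ M \subset G, matching M & no_short_augmenting k G M].

Lemma augmenting_twice G M P Q :
  {in G, forall f : {set V}, #|f| == 2} -> M \subset G -> matching M ->
  augmenting G M P -> augmenting G (symd M (pedge_set P)) Q ->
  exists q1 q2, [/\ augmenting G M q1, augmenting G M q2,
    plen q1 + plen q2 <= plen P + plen Q & [disjoint pedge_set q2 & pedge_set q1]].
Proof.
move=> twoG sMG matM augP augQ.
set M1 := symd M (pedge_set P) in augQ *; set M2 := symd M1 (pedge_set Q).
have matM1 : matching M1 := matching_symd_augmenting matM augP.
have matM2 : matching M2 := matching_symd_augmenting matM1 augQ.
have sPQ : symd M M2 \subset pedge_set P :|: pedge_set Q.
  apply/subsetP => h; rewrite !in_symd in_setU.
  by case: (h \in M); case: (h \in pedge_set P); case: (h \in pedge_set Q).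
have sDG : symd M M2 \subset G.
  by apply: subset_trans sPQ _; rewrite subUset !(pedge_set_sub augP, pedge_set_sub augQ).
have sM2G : M2 \subset G by rewrite !symd_subset ?(pedge_set_sub augP, pedge_set_sub augQ).
have twoM : {in M, forall f : {set V}, #|f| == 2} by move=> h /(subsetP sMG) /twoG.
have twoM2 : {in M2, forall f : {set V}, #|f| == 2} by move=> h /(subsetP sM2G) /twoG.
have [|[|q1 [|q2 []]] // _ pk] := augmenting_packing_exists (k := 2) matM matM2 twoM twoM2.
  by rewrite (card_symd_augmenting augQ) (card_symd_augmenting augP) addn2.
have [augps _] := pk; exists q1, q2; split.
- exact: augmenting_subset (augps _ (mem_head _ _)) sDG.
- by apply: augmenting_subset sDG; apply: augps; rewrite !inE eqxx orbT.
- have := augmenting_packing_plen pk; rewrite !big_cons big_nil addn0 => /leq_trans; apply.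
  have [[_ uP _] [_ uQ _]] := (augmenting_path augP, augmenting_path augQ).
  by rewrite -!card_pedge_set //; apply: leq_trans (subset_leq_card sPQ) (leq_card_setU _ _).
- by apply: augmenting_packing_disjoint pk _; rewrite inE.
Qed.

Lemma no_short_augmenting_symd k G M P e :
  {in G, forall f : {set V}, #|f| == 2} -> M \subset G -> matching M ->
  (forall q, augmenting G M q -> e \notin pedges q -> k <= plen q) ->
  augmenting G M P -> plen P <= k ->
  (forall q, augmenting G M q -> e \in pedges q -> plen P <= plen q) ->
  no_short_augmenting k G (symd M (pedge_set P)).
Proof.
move=> twoG sMG matM long_e augP lePk minP Q augQ; rewrite leqNgt; apply/negP => ltQk.
have [q1 [q2 [augq1 augq2 lenPQ]]] := augmenting_twice twoG sMG matM augP augQ.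
have geP q : augmenting G M q -> plen P <= plen q.
  move=> augq; case eq: (e \in pedges q); first exact: minP.
  by apply: leq_trans lePk (long_e _ _ _); rewrite ?eq.
move/disjoint_setI0/setP/(_ e); rewrite !inE andbC.
case: (boolP (e \in pedges q1)) => [e1 /negbT e2 | e1 _].
  by have := long_e _ augq2 e2; have := geP _ augq1; lia.
by have := long_e _ augq1 e1; have := geP _ augq2; lia.
Qed.


Lemma alg_step_invariant k es e M M' :
  all (fun f : {set V} => #|f| == 2) (rcons es e) ->
  alg_invariant k [set f in es] M -> alg_step k [set f in rcons es e] M e M' ->
  alg_invariant k [set f in rcons es e] M'.
Proof.
set G := [set f in rcons es e] => two [sMG0 matM short] [chosen unchanged].
have sG0G : [set f in es] \subset G.
  by apply/subsetP => f; rewrite !inE mem_rcons inE => ->; rewrite orbT.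
have twoG : {in G, forall f : {set V}, #|f| == 2} by move=> f; rewrite inE => /(allP two).
have sMG := subset_trans sMG0 sG0G.
have long_e q : augmenting G M q -> e \notin pedges q -> k <= plen q.
  move=> augq eq; apply: short; apply: (augmenting_restrict augq) => f fq.
  have [_ _ /(_ f fq)] := augmenting_path augq; rewrite !inE mem_rcons inE.
  by case/predU1P => // fe; rewrite -fe fq in eq.
case: (classic (exists p, [/\ augmenting G M p, e \in pedges p & plen p <= k - 1])).
  move=> ex; have [P [augP eP minP ->]] := chosen ex.
  have lePk : plen P <= k.
    by have [p [augp ep lepk]] := ex; have := minP p augp ep; lia.
  split; first by rewrite symd_subset ?(pedge_set_sub augP).
    exact: matching_symd_augmenting augP.
  exact: no_short_augmenting_symd twoG sMG matM long_e augP lePk minP.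
move=> nex; rewrite (unchanged nex); split => // q augq.
case eq: (e \in pedges q); last by rewrite long_e ?eq.
rewrite leqNgt; apply/negP => ltqk; apply: nex; exists q; split => //; lia.
Qed.

Lemma alg_run_invariant k es M : alg_run k es M ->
  all (fun f : {set V} => #|f| == 2) es -> alg_invariant k [set f in es] M.
Proof.
elim=> [|es0 e M0 M' _ IH step] two.
  split; [exact: sub0set | by move=> f g v; rewrite inE |].
  case=> [|x q] /augmenting_path [q2 _ sub] //.
  by have [h /sub] := vertex_mem_pedges q2 (mem_head x q); rewrite inE.
apply: (alg_step_invariant two (IH _) step).
by move: two; rewrite all_rcons => /andP [].
Qed.

Lemma alg_invariant_card k G M N : ~~ odd k ->
  {in G, forall f : {set V}, #|f| == 2} -> alg_invariant k G M ->
  N \subset G -> matching N -> k * #|N| <= (k + 2) * #|M|.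
Proof.
move=> evenk twoG [sMG matM short] sNG matN.
case: (leqP #|N| #|M|) => [leNM | ltMN]; first by nia.
have twoM : {in M, forall f : {set V}, #|f| == 2} by move=> f /(subsetP sMG) /twoG.
have twoN : {in N, forall f : {set V}, #|f| == 2} by move=> f /(subsetP sNG) /twoG.
have [|ps sz pk] := augmenting_packing_exists (k := #|N| - #|M|) matM matN twoM twoN.
  by lia.
have [augps _] := pk; have sDG : symd M N \subset G by rewrite symd_subset.
have lb : \sum_(p <- ps) k./2 <= \sum_(p <- ps) (plen p)./2.
  rewrite big_seq [X in _ <= X]big_seq; apply: leq_sum => p pps.
  by apply: half_leq; apply: short; apply: augmenting_subset (augps p pps) sDG.
have ub := leq_trans (augmenting_packing_half pk) (subset_leq_card (subsetIr _ M)).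
rewrite big_const_seq count_predT iter_addn_0 sz in lb.
have := odd_double_half k; rewrite (negbTE evenk) add0n -muln2.
move: (leq_trans lb ub); nia.
Qed.

Lemma alg_invariant_OPT k G M : ~~ odd k ->
  {in G, forall f : {set V}, #|f| == 2} -> alg_invariant k G M ->
  k * OPT G <= (k + 2) * #|M|.
Proof.
move=> evenk twoG inv; rewrite /OPT.
apply: (big_ind (fun x => k * x <= (k + 2) * #|M|)) => [|x y hx hy | N].
- by rewrite muln0.
- by rewrite maxnMr geq_max hx hy.
by case/matchingP => sNG matN; apply: alg_invariant_card evenk twoG inv sNG matN.
Qed.

End Algorithm.

Unset Implicit Arguments.
Import GRing.Theory Num.Theory.
Local Open Scope ring_scope.

Theorem theorem5 (V : finType) (k : nat) :
  (2 <= k)%N -> ~~ odd k ->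
  forall es : seq {set V}, uniq es -> all (fun e : {set V} => #|e| == 2%N) es ->
  forall M : {set {set V}}, alg_run k es M ->
  (1 - 2 / (k + 2)%:R) * (OPT [set f in es])%:R <= (#|M|%:R : rat).
Proof.
move=> _ evenk es _ two M run.
have twoG : {in [set f in es], forall f : {set V}, #|f| == 2%N}.
  by move=> f; rewrite inE => /(allP two).
have bound := alg_invariant_OPT evenk twoG (alg_run_invariant run two).
have pk2 : (0 : rat) < (k + 2)%:R by rewrite ltr0n addn2.
have -> : (1 - 2 / (k + 2)%:R : rat) = k%:R / (k + 2)%:R.
  by rewrite natrD; field; rewrite -natrD pnatr_eq0 addn2.
by rewrite mulrAC ler_pdivrMr // -!natrM ler_nat [X in (_ <= X)%N]mulnC.
Qed.
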